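(* For a discrete memoryless channel $\mathcal W$ from a finite set $\mathcal X$ to a finite set $\mathcal Y$, $\lim_{r\to0^+}E_{\rm sp}(r,\mathcal W)=U(\mathcal W)$.
   Context: $D(P\|Q)=\sum_xP(x)\log\frac{P(x)}{Q(x)}$ ($0\log(0/q)=0$; $+\infty$ if $P\not\ll Q$); for $\alpha\in(0,1)$, $D_\alpha(P\|Q)=\frac1{\alpha-1}\log\sum_xP(x)^\alpha Q(x)^{1-\alpha}$. For $P_X\in\mathcal P(\mathcal X)$, $P_{XY}(x,y)=P_X(x)\mathcal W(y|x)$. For $r>0$, $E_{\rm sp}(r,\mathcal W)=\sup_{\alpha\in(0,1]}\max_{P_X}\min_{Q_Y}\frac{1-\alpha}{\alpha}\big(D_\alpha(P_{XY}\|P_X\times Q_Y)-r\big)$ (the $\alpha=1$ term being $0$). $U(\mathcal W)=\max_{P_X}\min_{Q_Y}D(P_X\times Q_Y\|P_{XY})$. *)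

From HB Require Import structures.
From mathcomp Require Import all_boot all_order all_algebra.
From mathcomp Require Import all_classical all_reals all_analysis.
Set Implicit Arguments. Unset Strict Implicit. Unset Printing Implicit Defensive.
Import Order.TTheory GRing.Theory Num.Theory.
Local Open Scope classical_set_scope.
Local Open Scope ring_scope.

Section Defs.
Variable R : realType.

Definition is_pmf (T : finType) (P : T -> R) : Prop :=
  (forall t, 0 <= P t) /\ \sum_(t : T) P t = 1.

Definition pmfs (T : finType) : set (T -> R) := [set P | is_pmf P].
Arguments pmfs T : clear implicits.

Definition KL (T : finType) (P Q : T -> R) : \bar R :=
  if [exists t, (0 < P t) && (Q t == 0)] then +oo%E
  else (\sum_(t : T) (if P t == 0 then 0 else P t * ln (P t / Q t)))%:E.

(* Renyi divergence of order a in (0,1); log 0 = -oo gives +oo *)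
Definition renyi (T : finType) (a : R) (P Q : T -> R) : \bar R :=
  let s := \sum_(t : T) (P t `^ a * Q t `^ (1 - a)) in
  if s == 0 then +oo%E else ((a - 1)^-1 * ln s)%:E.

Definition joint (X Y : finType) (PX : X -> R) (W : X -> Y -> R) : X * Y -> R :=
  fun xy => PX xy.1 * W xy.1 xy.2.

Definition prodd (X Y : finType) (PX : X -> R) (QY : Y -> R) : X * Y -> R :=
  fun xy => PX xy.1 * QY xy.2.

Definition Esp_term (X Y : finType) (W : X -> Y -> R) (r a : R) : \bar R :=
  ereal_sup [set ereal_inf
      [set (((1 - a) / a)%:E * (renyi a (joint PX W) (prodd PX QY) - r%:E))%E
       | QY in pmfs Y] | PX in pmfs X].

(* sphere-packing exponent: sup over a in (0,1], the a = 1 term being 0 *)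
Definition Esp (X Y : finType) (W : X -> Y -> R) (r : R) : \bar R :=
  ereal_sup ([set Esp_term W r a | a in `]0, 1[] `|` [set 0%E]).

Definition Uch (X Y : finType) (W : X -> Y -> R) : \bar R :=
  ereal_sup [set ereal_inf [set KL (prodd PX QY) (joint PX W) | QY in pmfs Y]
            | PX in pmfs X].

End Defs.
Arguments pmfs {R} T.

From HB Require Import structures.
From mathcomp Require Import all_boot all_order all_algebra.
From mathcomp Require Import all_classical all_reals all_analysis.
From mathcomp Require Import ring lra.
Set Implicit Arguments. Unset Strict Implicit. Unset Printing Implicit Defensive.
Import Order.TTheory GRing.Theory Num.Theory.
Import numFieldNormedType.Exports.
Local Open Scope classical_set_scope.
Local Open Scope ring_scope.

(* E_sp(r) is a supremum over a in (0,1) and input distributions P of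
   min_Q (1-a)/a (D_a(P_XY || P x Q) - r), and E_sp is nonincreasing, so its limit
   at 0+ is its supremum over r > 0.  Since (1-a)/a D_a(P_XY || P x Q) is
   D_{1-a}(P x Q || P_XY) <= D(P x Q || P_XY), this limit is at most U.
   Conversely, fix P.  For every Q, Hoelder's inequality bounds
   (1-a)/a D_a(P_XY || P x Q) below by -ln G(a), where G(a) = \sum_y g_a(y) and
   g_a(y) is any upper bound of the power mean (\sum_x P(x) W(y|x)^a)^(1/a).  We
   choose g_a continuous at a = 0, where it is the geometric mean
   exp(\sum_x P(x) ln W(y|x)).  Normalising g_0 gives an output distribution Q*
   with D(P x Q* || P_XY) = -ln G(0), so -ln G(a) approaches a value at least
   min_Q D(P x Q || P_XY) as a -> 0, and taking r small then brings E_sp(r)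
   arbitrarily close to U. *)

Section RealFacts.
Variable R : realType.

Lemma ln_le_subr1 (x : R) : 0 < x -> ln x <= x - 1.
Proof. by move=> x0; have := le_ln1Dx (x := x - 1); rewrite subrKC; apply; lra. Qed.

Lemma sum1_exists_neq0 (T : finType) (w : T -> R) :
  \sum_t w t = 1 -> exists t, w t != 0.
Proof.
move=> w1; apply/existsP; apply: contraT; rewrite negb_exists => /forallP w0.
by move: w1; rewrite big1 => [/esym/eqP|t _]; [rewrite oner_eq0 | exact/eqP/negPn].
Qed.

Lemma jensen_ln (T : finType) (w z : T -> R) :
  (forall t, 0 <= w t) -> \sum_t w t = 1 -> (forall t, w t != 0 -> 0 < z t) ->
  0 < \sum_t w t * z t /\ \sum_t w t * ln (z t) <= ln (\sum_t w t * z t).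
Proof.
move=> w0 w1 wz; set m := \sum_t w t * z t.
have m0 : 0 < m.
  have [t wt] := sum1_exists_neq0 w1.
  rewrite /m (bigD1 t) //= ltr_pwDl ?mulr_gt0 ?wz ?lt0r ?wt ?w0 // sumr_ge0 // => s _.
  by have [->|/wz/ltW] := eqVneq (w s) 0; rewrite ?mul0r // => /(mulr_ge0 (w0 s)).
split => //.
have -> : ln m = \sum_t w t * (ln m + (z t / m - 1)).
  under eq_bigr do rewrite mulrDr mulrBr mulr1 mulrA.
  by rewrite big_split /= sumrB -!mulr_suml w1 divff ?gt_eqF // !mul1r subrr addr0.
apply: ler_sum => t _; have [->|wt] := eqVneq (w t) 0; first by rewrite !mul0r.
rewrite ler_wpM2l // -lerBlDl -ln_div ?posrE ?wz //; exact/ln_le_subr1/divr_gt0/m0/wz.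
Qed.

Lemma young_powR (x z a : R) : 0 <= x -> 0 <= z -> 0 < a < 1 ->
  x `^ (1 - a) * z `^ a <= (1 - a) * x + a * z.
Proof.
move=> x0 z0 /andP[a0 a1]; have a1' : 0 < 1 - a by rewrite subr_gt0.
have := conjugate_powR (powR_ge0 x (1 - a)) (powR_ge0 z a)
  (ltac:(by rewrite invr_gt0) : 0 < (1 - a)^-1) (ltac:(by rewrite invr_gt0) : 0 < a^-1).
rewrite !invrK subrK -!powRrM !mulfV ?gt_eqF // !powRr1 //.
by rewrite (mulrC x) (mulrC z); apply.
Qed.

Lemma powR_le1 (w a : R) : 0 <= w <= 1 -> 0 <= a -> w `^ a <= 1.
Proof.
move=> /andP[w0 w1] a0; rewrite /powR; case: ifPn => _; first by case: (a == 0).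
by rewrite expR_le1 mulr_ge0_le0 // ln_le0.
Qed.

Lemma powRV_le_expR (h a : R) : 0 <= h -> 0 < a -> h `^ a^-1 <= expR ((h - 1) / a).
Proof.
rewrite le_eqVlt => /predU1P[<- a0|h0 a0].
  by rewrite powR0 ?invr_eq0 ?gt_eqF // expR_ge0.
by rewrite /powR gt_eqF // ler_expR mulrC ler_pM2r ?invr_gt0 // ln_le_subr1.
Qed.

Lemma expR_div_le_div (h p a : R) : 0 < a -> 0 < p -> h <= 1 - p ->
  expR ((h - 1) / a) <= a / p.
Proof.
move=> a0 p0 hp; apply: (@le_trans _ _ (expR (- p / a))).
  by rewrite ler_expR ler_pM2r ?invr_gt0 //; lra.
(* exp(-t) <= 1/(1 + t) <= 1/t for t = p / a *)
rewrite mulNr expRN -[a / _]invf_div lef_pV2 ?posrE ?expR_gt0 ?divr_gt0 //.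
by apply: le_trans (expR_ge1Dx _); rewrite lerDr.
Qed.

Lemma powRV (v a : R) : 0 < v -> v^-1 `^ a = (v `^ a)^-1.
Proof. by move=> v0; rewrite /powR !gt_eqF ?invr_gt0 // lnV ?posrE // mulrN expRN. Qed.

Lemma pmf_le1 (T : finType) (P : T -> R) t : is_pmf P -> P t <= 1.
Proof.
by move=> [P0 <-]; rewrite (bigD1 t) //= lerDl sumr_ge0.
Qed.

Lemma pmf_delta (T : finType) (t0 : T) : is_pmf (fun t => (t == t0)%:R : R).
Proof.
split=> [t|]; first by case: (t == t0).
by rewrite (bigD1 t0) //= eqxx big1 ?addr0 // => t /negbTE ->.
Qed.

Lemma pmf_card_gt0 (T : finType) (P : T -> R) : is_pmf P -> (0 < #|T|)%N.
Proof. by move=> [_ /sum1_exists_neq0[t _]]; apply/card_gt0P; exists t. Qed.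

Lemma sum_pair (T1 T2 : finType) (f : T1 * T2 -> R) :
  \sum_t f t = \sum_x \sum_y f (x, y).
Proof. by rewrite pair_big; apply: eq_bigr => -[]. Qed.

Lemma powR_sub1_div_le (w a : R) : 0 < a -> 0 < w <= 1 ->
  (w `^ a - 1) / a <= ln w / (1 - a * ln w).
Proof.
move=> a0 /andP[w0 w1]; set u := ln w.
have au : a * u <= 0 by apply: mulr_ge0_le0; [exact: ltW | exact: ln_le0].
have d0 : 0 < 1 - a * u by lra.
have wd : w `^ a * (1 - a * u) <= 1.
  rewrite /powR gt_eqF // -/u mulrC; have := expR_ge1Dx (- (a * u)).
  by rewrite -(@ler_pM2r _ (expR (a * u))) ?expR_gt0 // -expRD addNr expR0.
rewrite ler_pdivlMr // mulrAC ler_pdivrMr //; nra.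
Qed.

(* Hoelder's inequality with exponents 1/(1-a) and 1/a. *)
Lemma sum_powR_mul_le (T : finType) (Q h : T -> R) (a G : R) :
  is_pmf Q -> (forall t, 0 <= h t) -> 0 < a < 1 -> 0 < G ->
  \sum_t h t `^ a^-1 <= G -> \sum_t Q t `^ (1 - a) * h t <= G `^ a.
Proof.
move=> [Q0 Q1] h0 /andP[a0 a1] G0 hG; have Ga : 0 < G `^ a by rewrite powR_gt0.
apply: (@le_trans _ _ (\sum_t G `^ a * ((1 - a) * Q t + a * (h t `^ a^-1 / G)))).
  apply: ler_sum => t _.
  have {1}-> : h t = G `^ a * (h t `^ a^-1 / G) `^ a.
    rewrite powRM ?powR_ge0 ?invr_ge0 ?ltW // powRV // -powRrM mulVf ?gt_eqF //.
    by rewrite powRr1 // mulrCA divff ?gt_eqF ?mulr1 // powR_gt0.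
  rewrite mulrCA; apply: ler_wpM2l; first exact: ltW.
  apply: young_powR; rewrite ?a0 ?a1 //.
  by rewrite divr_ge0 ?powR_ge0 ?ltW.
rewrite -mulr_sumr -[leRHS]mulr1; apply: ler_wpM2l; first exact: ltW.
rewrite big_split /= -!mulr_sumr Q1.
have : \sum_t h t `^ a^-1 / G <= 1 by rewrite -mulr_suml ler_pdivrMr ?mul1r.
by move=> /(ler_wpM2l (ltW a0)); lra.
Qed.

Lemma lee_pmul_subl (c r1 r2 : R) (D : \bar R) : 0 <= c -> r1 <= r2 ->
  (c%:E * (D - r2%:E) <= c%:E * (D - r1%:E))%E.
Proof.
move=> c0 r12; case: D => [d||] //=.
by rewrite -!EFinB -!EFinM lee_fin ler_wpM2l // lerB.
Qed.

Lemma lee_pmul_sub (c r k : R) (D : \bar R) : 0 < c ->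
  (k%:E <= c%:E * D)%E -> ((k - c * r)%:E <= c%:E * (D - r%:E))%E.
Proof.
move=> c0; case: D => [d||] h.
- by move: h; rewrite -!EFinB -!EFinM !lee_fin mulrBr => h; rewrite lerB.
- by rewrite /= gt0_muley ?lte_fin // leey.
- by move: h; rewrite gt0_muleNy ?lte_fin // leeNy_eq.
Qed.

End RealFacts.

Section Divergences.
Variables (R : realType) (T : finType) (p q : T -> R).
Hypotheses (pP : is_pmf p) (qP : is_pmf q).

Let abscont := ~~ [exists t, (0 < p t) && (q t == 0)].

Lemma abscont_pos t : abscont -> p t != 0 -> 0 < p t /\ 0 < q t.
Proof.
move=> hac pt; have p0 : 0 < p t by rewrite lt0r pt pP.1.
split => //; rewrite lt0r qP.1 andbT; apply: contra hac => /eqP qt.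
by apply/existsP; exists t; rewrite p0 qt eqxx.
Qed.

Lemma KL_sumE : abscont ->
  \sum_t (if p t == 0 then 0 else p t * ln (p t / q t)) =
  - \sum_t p t * ln (if p t == 0 then 1 else q t / p t).
Proof.
move=> hac; rewrite -sumrN; apply: eq_bigr => t _.
have [->|pt] := eqVneq (p t) 0; first by rewrite mul0r oppr0.
have [p0 q0] := abscont_pos hac pt.
by rewrite -invf_div lnV ?posrE ?divr_gt0 // mulrN.
Qed.

Lemma KL_ge0 : (0 <= KL p q)%E.
Proof.
rewrite /KL; case: ifPn => [_|hac]; first exact: leey.
rewrite lee_fin KL_sumE // oppr_ge0.
set z := fun t => if p t == 0 then 1 else q t / p t.
have z0 t : p t != 0 -> 0 < z t.
  move=> pt; rewrite /z (negbTE pt); have [p0 q0] := abscont_pos hac pt.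
  exact: divr_gt0.
have [_ /le_trans] := jensen_ln pP.1 pP.2 z0; apply; apply: ln_le0.
rewrite -qP.2; apply: ler_sum => t _; rewrite /z.
by have [->|pt] := eqVneq (p t) 0; rewrite ?mul0r ?qP.1 // mulrC divfK.
Qed.

Lemma renyi_le_KL (a : R) : 0 < a < 1 ->
  (((1 - a) / a)%:E * renyi a q p <= KL p q)%E.
Proof.
move=> /andP[a0 a1]; rewrite /KL; case: ifPn => [_|hac]; first exact: leey.
set z := fun t => if p t == 0 then 1 else (q t / p t) `^ a.
have z0 t : p t != 0 -> 0 < z t.
  move=> pt; rewrite /z (negbTE pt); have [p0 q0] := abscont_pos hac pt.
  exact/powR_gt0/divr_gt0.
have [] := jensen_ln pP.1 pP.2 z0.
have -> : \sum_t p t * z t = \sum_t q t `^ a * p t `^ (1 - a).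
  apply: eq_bigr => t _; rewrite /z.
  have [->|pt] := eqVneq (p t) 0.
    by rewrite mul0r powR0 ?mulr0 // subr_eq0 gt_eqF.
  have [p0 q0] := abscont_pos hac pt.
  rewrite powRM ?invr_ge0 ?ltW // powRV // powRB ?implybT ?gt_eqF // powRr1 ?ltW //.
  by field; rewrite powR_eq0 gt_eqF.
have -> : \sum_t p t * ln (z t) =
    a * \sum_t p t * ln (if p t == 0 then 1 else q t / p t).
  rewrite mulr_sumr; apply: eq_bigr => t _; rewrite /z.
  by case: ifP => _; rewrite ?ln1 ?mulr0 // ln_powR mulrCA.
set s := \sum_t _ * _ => s0 hs; rewrite /renyi gt_eqF // -EFinM lee_fin KL_sumE //.
have -> : (1 - a) / a * ((a - 1)^-1 * ln s) = - (ln s / a).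
  by field; rewrite gt_eqF //= subr_eq0 lt_eqF.
by rewrite lerN2 ler_pdivlMr // mulrC.
Qed.

End Divergences.

Section Channel.
Variables (R : realType) (X Y : finType) (W : X -> Y -> R).
Hypothesis HW : forall x, is_pmf (W x).

Lemma joint_pmf (P : X -> R) : is_pmf P -> is_pmf (joint P W).
Proof.
move=> [P0 P1]; split => [t|]; first by rewrite mulr_ge0 ?(HW _).1.
rewrite sum_pair -P1; apply: eq_bigr => x _.
by rewrite /joint /= -mulr_sumr (HW x).2 mulr1.
Qed.

Lemma prodd_pmf (P : X -> R) (Q : Y -> R) :
  is_pmf P -> is_pmf Q -> is_pmf (prodd P Q).
Proof.
move=> [P0 P1] [Q0 Q1]; split => [t|]; first by rewrite mulr_ge0.
rewrite sum_pair -P1; apply: eq_bigr => x _.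
by rewrite /prodd /= -mulr_sumr Q1 mulr1.
Qed.

Definition zero_input (P : X -> R) (y : Y) : option X :=
  [pick x | (0 < P x) && (W x y == 0)].

(* An upper bound of the power mean (\sum_x P x W(x,y)^a)^(1/a) that is continuous
   in [a] at [0], where it is the geometric mean exp(\sum_x P x ln W(x,y)), or [0]
   when some input of positive probability cannot produce [y]. *)
Definition mean_env (P : X -> R) (a : R) (y : Y) : R :=
  if zero_input P y is Some x then a / P x
  else expR (\sum_x P x * (ln (W x y) / (1 - a * ln (W x y)))).

Definition mean_env_sum (P : X -> R) (a : R) : R := \sum_y mean_env P a y.

Lemma zero_inputP (P : X -> R) y : is_pmf P -> zero_input P y = None ->
  forall x, P x != 0 -> 0 < W x y.
Proof.
move=> [P0 _]; rewrite /zero_input; case: pickP => // hn _ x Px.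
rewrite lt0r (HW x).1 andbT; apply: contraFN (hn x) => /eqP->.
by rewrite lt0r Px P0 eqxx.
Qed.

Lemma mean_env_gt0 (P : X -> R) a y : 0 < a -> 0 < mean_env P a y.
Proof.
rewrite /mean_env /zero_input => a0; case: pickP => [x /andP[Px _]|_].
  exact: divr_gt0.
exact: expR_gt0.
Qed.

Lemma mean_env_sum_gt0 (P : X -> R) a : is_pmf P -> 0 < a -> 0 < mean_env_sum P a.
Proof.
move=> /pmf_card_gt0/card_gt0P[x _] a0.
have /card_gt0P[y _] := pmf_card_gt0 (HW x); rewrite /mean_env_sum (bigD1 y) //=.
by rewrite ltr_pwDl ?mean_env_gt0 // sumr_ge0 // => z _; exact/ltW/mean_env_gt0.
Qed.

Lemma powR_mean_le_mean_env (P : X -> R) a y : is_pmf P -> 0 < a < 1 ->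
  (\sum_x P x * W x y `^ a) `^ a^-1 <= mean_env P a y.
Proof.
move=> PP /andP[a0 a1]; have [P0 P1] := PP.
have W01 x : 0 <= W x y <= 1 by rewrite (HW x).1 pmf_le1.
apply: (le_trans (powRV_le_expR _ a0)).
  by rewrite sumr_ge0 // => x _; rewrite mulr_ge0 ?powR_ge0.
rewrite /mean_env; case hz : (zero_input P y) => [x0|].
  move: hz; rewrite /zero_input; case: pickP => // x /andP[Px /eqP W0] [xx0]; subst x.
  apply: (expR_div_le_div a0 Px); rewrite -P1 (bigD1 x0) //= [in leRHS](bigD1 x0) //=.
  rewrite W0 powR0 ?gt_eqF // mulr0 add0r addrAC subrr add0r; apply: ler_sum => x _.
  by apply: ler_piMr => //; apply: powR_le1; [exact: W01 | exact: ltW].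
rewrite ler_expR -[X in (_ - X) / a]P1 -sumrB mulr_suml; apply: ler_sum => x _.
rewrite -[X in _ - X]mulr1 -mulrBr -mulrA.
have [->|Px] := eqVneq (P x) 0; first by rewrite !mul0r.
rewrite ler_wpM2l // powR_sub1_div_le // (zero_inputP PP hz) //.
by have /andP[_ ->] := W01 x.
Qed.

Lemma renyi_sum_joint_prodd (P : X -> R) (Q : Y -> R) a :
  is_pmf P -> is_pmf Q ->
  \sum_t joint P W t `^ a * prodd P Q t `^ (1 - a) =
  \sum_y Q y `^ (1 - a) * \sum_x P x * W x y `^ a.
Proof.
move=> [P0 _] [Q0 _]; rewrite sum_pair exchange_big /=; apply: eq_bigr => y _.
rewrite mulr_sumr; apply: eq_bigr => x _.
rewrite /joint /prodd /= !powRM ?(HW x).1 // mulrACA -powRD ?subrKC ?oner_eq0 //.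
by rewrite powRr1 //; ring.
Qed.

Lemma ln_mean_env_le_renyi (P : X -> R) (Q : Y -> R) a :
  is_pmf P -> is_pmf Q -> 0 < a < 1 ->
  ((- ln (mean_env_sum P a))%:E <=
   ((1 - a) / a)%:E * renyi a (joint P W) (prodd P Q))%E.
Proof.
move=> PP QP a01; have /andP[a0 a1] := a01.
have G0 := mean_env_sum_gt0 PP a0.
rewrite /renyi renyi_sum_joint_prodd //; set s := \sum_y _.
have [_|s0] := eqVneq s 0; first by rewrite gt0_muley ?leey // lte_fin divr_gt0 ?subr_gt0.
have h0 y : 0 <= \sum_x P x * W x y `^ a.
  by rewrite sumr_ge0 // => x _; rewrite mulr_ge0 ?powR_ge0 ?PP.1.
have sG : s <= mean_env_sum P a `^ a.
  apply: sum_powR_mul_le => //; apply: ler_sum => y _.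
  exact: powR_mean_le_mean_env.
have s_gt0 : 0 < s by rewrite lt0r s0 sumr_ge0 // => y _; rewrite mulr_ge0 ?powR_ge0.
rewrite -EFinM lee_fin.
have -> : (1 - a) / a * ((a - 1)^-1 * ln s) = - (ln s / a).
  by field; rewrite gt_eqF //= subr_eq0 lt_eqF.
by rewrite lerN2 ler_pdivrMr // mulrC -ln_powR ler_ln ?posrE ?powR_gt0.
Qed.

Definition Uch_term (P : X -> R) : \bar R :=
  ereal_inf [set KL (prodd P Q) (joint P W) | Q in pmfs Y].

Lemma mean_env0 (P : X -> R) y : mean_env P 0 y =
  if zero_input P y is Some _ then 0 else expR (\sum_x P x * ln (W x y)).
Proof.
rewrite /mean_env; case: (zero_input P y) => [x|]; first by rewrite mul0r.
by congr expR; apply: eq_bigr => x _; rewrite mul0r subr0 divr1.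
Qed.

(* The output distribution attaining the infimum in [Uch_term P]. *)
Definition tilted (P : X -> R) (y : Y) : R := mean_env P 0 y / mean_env_sum P 0.

Lemma tilted_pmf (P : X -> R) : 0 < mean_env_sum P 0 -> is_pmf (tilted P).
Proof.
move=> F0; split => [y|]; last by rewrite -mulr_suml divff ?gt_eqF.
rewrite divr_ge0 ?(ltW F0) // mean_env0; case: (zero_input P y) => //; exact: expR_ge0.
Qed.

Lemma KL_tilted_term (P : X -> R) y : is_pmf P -> 0 < mean_env_sum P 0 ->
  \sum_x (if prodd P (tilted P) (x, y) == 0 then 0 else
     prodd P (tilted P) (x, y) * ln (prodd P (tilted P) (x, y) / joint P W (x, y))) =
  - (tilted P y * ln (mean_env_sum P 0)).
Proof.
move=> PP F0; rewrite /prodd /joint /=; set F := mean_env_sum P 0.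
case hz : (zero_input P y) => [x0|].
  have -> : tilted P y = 0 by rewrite /tilted mean_env0 hz mul0r.
  by rewrite mul0r oppr0 big1 // => x _; rewrite mulr0 eqxx.
set L := \sum_x P x * ln (W x y).
have QE : tilted P y = expR L / F by rewrite /tilted mean_env0 hz.
have Q0 : 0 < tilted P y by rewrite QE divr_gt0 ?expR_gt0.
transitivity (\sum_x (tilted P y * (L - ln F) * P x - tilted P y * (P x * ln (W x y)))).
  apply: eq_bigr => x _; have [->|Px] := eqVneq (P x) 0.
    by rewrite !mul0r eqxx !mulr0 subr0.
  have W0 := zero_inputP PP hz Px.
  rewrite mulf_eq0 (negbTE Px) gt_eqF //= invfM mulrACA divff // mul1r.
  rewrite ln_div ?posrE // QE ln_div ?posrE ?expR_gt0 // expRK; ring.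
by rewrite sumrB -!mulr_sumr PP.2 -/L; ring.
Qed.

Lemma KL_tilted (P : X -> R) : is_pmf P -> 0 < mean_env_sum P 0 ->
  KL (prodd P (tilted P)) (joint P W) = (- ln (mean_env_sum P 0))%:E.
Proof.
move=> PP F0; rewrite /KL ifF; last first.
  apply/negbTE/existsP => -[[x y] /andP[]]; rewrite /prodd /joint /=.
  case hz : (zero_input P y) => [x0|].
    by rewrite /tilted mean_env0 hz mul0r mulr0 ltxx.
  move=> hpos; have Px : P x != 0 by apply: contraTneq hpos => ->; rewrite mul0r ltxx.
  by apply/negP; rewrite mulf_neq0 // gt_eqF // (zero_inputP PP hz Px).
rewrite sum_pair exchange_big /=; under eq_bigr do rewrite KL_tilted_term //.
by rewrite sumrN -mulr_suml (tilted_pmf F0).2 mul1r.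
Qed.

Lemma mean_env_sum0_lt (P : X -> R) M : is_pmf P ->
  (M%:E < Uch_term P)%E -> mean_env_sum P 0 < expR (- M).
Proof.
move=> PP hM; set F := mean_env_sum P 0.
have : 0 <= F by rewrite sumr_ge0 // => y _; rewrite mean_env0; case: zero_input.
rewrite le_eqVlt => /predU1P[<-|F0]; first exact: expR_gt0.
have : (Uch_term P <= (- ln F)%:E)%E.
  rewrite -KL_tilted //; apply: ereal_inf_lbound.
  by exists (tilted P) => //; exact: tilted_pmf.
move=> /(lt_le_trans hM); rewrite lte_fin => lt_M.
by rewrite -[F]lnK ?posrE // ltr_expR ltrNr.
Qed.

Lemma mean_env_sum_cvg0 (P : X -> R) :
  mean_env_sum P a @[a --> (0 : R)] --> mean_env_sum P 0.
Proof.
apply: cvg_big => // [|y _]; first exact: add_continuous.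
rewrite /mean_env; case: (zero_input P y) => [x|]; first exact: cvgMr_tmp cvg_id.
apply: continuous_cvg; first exact: continuous_expR.
apply: cvg_big => // [|x _]; first exact: add_continuous.
apply: cvgMl_tmp; apply: cvgMl_tmp; apply: cvgV; first by rewrite mul0r subr0 oner_neq0.
by apply: cvgB; [exact: cvg_cst | exact: cvgMr_tmp cvg_id].
Qed.

Lemma Uch_term_ge0 (P : X -> R) : is_pmf P -> (0 <= Uch_term P)%E.
Proof.
move=> PP; apply: le_ereal_inf_tmp => _ [Q QP <-].
by apply: KL_ge0; [exact: prodd_pmf | exact: joint_pmf].
Qed.

Lemma Uch_ge0 : (0 < #|X|)%N -> (0 <= Uch W)%E.
Proof.
move=> /card_gt0P[x0 _]; apply: (le_trans (Uch_term_ge0 (pmf_delta R x0))).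
by apply: ereal_sup_ubound; exists (fun x => (x == x0)%:R) => //; exact: pmf_delta.
Qed.

Lemma Esp_term_le_Esp r a : 0 < a < 1 -> (Esp_term W r a <= Esp W r)%E.
Proof. by move=> a01; apply: ereal_sup_ubound; left; exists a; rewrite //= in_itv. Qed.

Lemma Esp_nonincreasing : {in `]0, +oo[ &, nonincreasing_fun (Esp W)}.
Proof.
move=> r1 r2 _ _ r12; apply: ge_ereal_sup => _ [[a + <-]|->]; last first.
  by apply: ereal_sup_ubound; right.
rewrite /= in_itv /= => a01.
apply: le_trans (Esp_term_le_Esp _ a01); have /andP[a0 a1] := a01.
apply: ge_ereal_sup => _ [P PP <-].
apply: le_trans; last by apply: ereal_sup_ubound; exists P.
apply: le_ereal_inf_tmp => _ [Q QP <-].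
apply: le_trans; first by apply: ereal_inf_lbound; exists Q.
by apply: lee_pmul_subl; rewrite // divr_ge0 ?subr_ge0 ?(ltW a0) ?(ltW a1).
Qed.

Lemma Esp_le_Uch r : (0 < #|X|)%N -> 0 < r -> (Esp W r <= Uch W)%E.
Proof.
move=> X0 r0; apply: ge_ereal_sup => _ [[a + <-]|->]; last exact: Uch_ge0.
rewrite /= in_itv /= => a01; have /andP[a0 a1] := a01.
apply: ge_ereal_sup => _ [P PP <-].
apply: (@le_trans _ _ (Uch_term P)); last by apply: ereal_sup_ubound; exists P.
apply: le_ereal_inf_tmp => _ [Q QP <-].
apply: le_trans; first by apply: ereal_inf_lbound; exists Q.
apply: le_trans (lee_pmul_subl _ _ (ltW r0)) _.
  by rewrite divr_ge0 ?subr_ge0 ?(ltW a0) ?(ltW a1).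
by rewrite sube0; apply: renyi_le_KL => //; [exact: prodd_pmf | exact: joint_pmf].
Qed.

Lemma Esp_gt (M : R) : (M%:E < Uch W)%E -> exists2 r, 0 < r & (M%:E < Esp W r)%E.
Proof.
move=> /ereal_sup_gt[_ [P PP <-] hM].
have hF := mean_env_sum0_lt PP hM.
have [a a01 ha] : exists2 a, 0 < a < 1 & mean_env_sum P a < expR (- M).
  near (0 : R)^'+ => a; exists a.
    by apply/andP; split; near: a; [exact: nbhs_right_gt | exact: nbhs_right_lt].
  by near: a; apply: cvgr_lt hF; exact/cvg_at_right_filter/mean_env_sum_cvg0.
have /andP[a0 a1] := a01; set H := mean_env_sum P a in ha.
have H0 : 0 < H := mean_env_sum_gt0 PP a0.
set d := - ln H - M; have d0 : 0 < d by rewrite subr_gt0 ltrNr -ltr_expR lnK.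
have c0 : 0 < (1 - a) / a by rewrite divr_gt0 ?subr_gt0.
set c := (1 - a) / a.
exists (d / 2 / c); first by rewrite !divr_gt0 // subr_gt0.
apply: (@lt_le_trans _ _ (M + d / 2)%:E); first by rewrite lte_fin ltrDl divr_gt0.
apply: le_trans (Esp_term_le_Esp _ a01).
apply: le_trans; last by apply: ereal_sup_ubound; exists P.
apply: le_ereal_inf_tmp => _ [Q QP <-].
have -> : M + d / 2 = - ln H - c * (d / 2 / c) by rewrite /d; field; rewrite gt_eqF.
exact/lee_pmul_sub/ln_mean_env_le_renyi.
Unshelve. all: by end_near.
Qed.

Lemma sup_Esp_le_Uch : (0 < #|X|)%N ->
  (ereal_sup (Esp W @` [set` `]0, +oo[%R]) <= Uch W)%E.
Proof.
move=> X0; apply: ge_ereal_sup => _ [r + <-].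
by rewrite /= in_itv /= andbT; exact: Esp_le_Uch.
Qed.

Lemma Uch_le_sup_Esp : (Uch W <= ereal_sup (Esp W @` [set` `]0, +oo[%R]))%E.
Proof.
set S := ereal_sup _.
have ubS r : 0 < r -> (Esp W r <= S)%E.
  by move=> r0; apply: ereal_sup_ubound; exists r; rewrite //= in_itv /= r0.
have S0 : (0 <= S)%E by apply: le_trans (ubS 1 ltr01); apply: ereal_sup_ubound; right.
rewrite leNgt; apply/negP; clearbody S; case: S S0 ubS => [s||] //= _ ubS.
  by move=> /Esp_gt[r r0]; apply/negP; rewrite -leNgt; exact: ubS.
by rewrite ltNge leey.
Qed.

End Channel.

Theorem mainTheorem5 (R : realType) (X Y : finType) (HX : (0 < #|X|)%N)
  (W : X -> Y -> R) (HW : forall x, is_pmf (W x)) :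
  Esp W r @[r --> (0:R)^'+] --> Uch W.
Proof.
have -> : Uch W = ereal_sup (Esp W @` [set` `]0, +oo[%R]).
  by apply/le_anti; rewrite Uch_le_sup_Esp // sup_Esp_le_Uch.
exact: nonincreasing_at_right_cvge (Esp_nonincreasing W).
Qed.
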